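(* With the notation below: (i) For each $H\in C_p$ there is a unique map $\chi_H:H\to H_p/(p-1)H_p\simeq\mathbb{Z}/(p-1)\mathbb{Z}$ such that $\chi_H=\chi\circ\lambda^{-1}$ (i.e. $\chi_H(x)=\chi(\lambda^{-1}x)$) for every $\lambda\in\mathbb{R}_+^*$ with $H=\lambda H_p$. (ii) The subgroup $\mathcal P$ of principal divisors is contained in the kernel of the group homomorphism $\chi:\mathrm{Div}(C_p)\to\mathbb{Z}/(p-1)\mathbb{Z}$, $\chi(D)=\sum_H\chi_H(D(H))$.
   Context: Let $p$ be a prime and $H_p=\mathbb{Z}[1/p]\subset\mathbb{Q}$. The ring homomorphism $\chi:H_p\to\mathbb{Z}/(p-1)\mathbb{Z}$ is $\chi(a/p^n)=a\bmod(p-1)$ ($a\in\mathbb{Z}$, $n\in\mathbb{N}$); its kernel is $(p-1)H_p$. $C_p$ is the set of subgroups $H=\lambda H_p\subset\mathbb{R}$, $\lambda>0$. $\mathcal K(C_p)$: continuous piecewise affine functions $f:(0,\infty)\to\mathbb{R}$ with slopes in $H_p$ and $f(p\lambda)=f(\lambda)$ (plus the constant $-\infty$). For real-valued $f$ and $H=\lambda H_p$, $\mathrm{Ord}_H(f)=h_+-h_-$ with $h_\pm=\lim_{\epsilon\to0\pm}(f((1+\epsilon)\lambda)-f(\lambda))/\epsilon\in H$. A divisor $D$ on $C_p$ assigns $D(H)\in H$ to each $H\in C_p$, zero for all but finitely many $H$; $\mathrm{Div}(C_p)$ is the group of divisors under pointwise addition; the principal divisor of real-valued $f\in\mathcal K(C_p)$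 is $(f)(H)=\mathrm{Ord}_H(f)$, and $\mathcal P$ is the subgroup of principal divisors. *)

From HB Require Import structures.
From mathcomp Require Import all_boot all_order all_algebra.
From mathcomp Require Import all_classical all_reals all_analysis.
Set Implicit Arguments. Unset Strict Implicit. Unset Printing Implicit Defensive.
Import Order.TTheory GRing.Theory Num.Theory.
Import numFieldNormedType.Exports.
Local Open Scope classical_set_scope.
Local Open Scope ring_scope.

Section Defs.
Variable R : realType.
Variable p : nat.

Definition Hp : set R := [set x | exists (a : int) (n : nat), x = a%:~R / (p%:R ^+ n)].

Definition scaledHp (l : R) : set R := [set l * y | y in Hp].

Definition Cp : set (set R) := [set H | exists l : R, 0 < l /\ H = scaledHp l].

(* chi : H_p -> Z/(p-1)Z, chi(a/p^n) = a mod (p-1); the class is represented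
   by its canonical residue (a %% (p-1))%Z in [0, p-1) (an int).
   Outside H_p the value is junk (0). *)
Definition chi (x : R) : int :=
  match pselect (exists an : int * nat, x = an.1%:~R / (p%:R ^+ an.2)) with
  | left h => ((projT1 (cid h)).1 %% (p.-1)%:Z)%Z
  | right _ => 0%Z
  end.

Definition lamH (H : set R) : R :=
  match pselect (exists l : R, 0 < l /\ H = scaledHp l) with
  | left h => projT1 (cid h)
  | right _ => 1
  end.

(* chi_H(x) = chi(lambda^-1 x) for (a chosen) lambda with H = lambda H_p;
   by part (i) of the proposition this does not depend on the choice. *)
Definition chiH (H : set R) (x : R) : int := chi ((lamH H)^-1 * x).

Definition is_divisor (D : set R -> R) : Prop :=
  (forall H, Cp H -> H (D H)) /\
  (forall H, ~ Cp H -> D H = 0) /\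
  finite_set [set H | D H != 0].

(* chi(D) = sum_H chi_H(D(H)), as an integer; its class mod (p-1) is the
   value in Z/(p-1)Z. *)
Definition chiDiv (D : set R -> R) : int :=
  (\sum_(H \in [set H | D H != 0]) chiH H (D H))%R.

Definition piecewise_affine_Hp (f : R -> R) : Prop :=
  forall a b : R, 0 < a -> a <= b ->
    exists (k : nat) (t : nat -> R),
      t 0%N = a /\ t k = b /\
      (forall i, (i < k)%N -> t i < t i.+1) /\
      (forall i, (i < k)%N -> exists c d : R, Hp c /\
         forall x, t i <= x <= t i.+1 -> f x = c * x + d).

(* real-valued elements of K(C_p) (the constant -oo is excluded) *)
Definition inK (f : R -> R) : Prop :=
  (forall x : R, 0 < x -> {for x, continuous f}) /\
  piecewise_affine_Hp f /\
  (forall x : R, 0 < x -> f (p%:R * x) = f x).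

(* Ord_H(f) = h_+ - h_-, computed at lambda with H = lambda H_p *)
Definition Ord (f : R -> R) (l : R) : R :=
  lim ((fun e : R => (f ((1 + e) * l) - f l) / e) @ 0^'+) -
  lim ((fun e : R => (f ((1 + e) * l) - f l) / e) @ 0^'-).

Definition principal_div (f : R -> R) : set R -> R :=
  fun H => if `[< Cp H >] then Ord f (lamH H) else 0.

End Defs.

From HB Require Import structures.
From mathcomp Require Import all_boot all_order all_algebra.
From mathcomp Require Import all_classical all_reals all_analysis.
From mathcomp Require Import ring lra.
Import numFieldNormedType.Exports.
Import Order.TTheory GRing.Theory Num.Theory.
Local Open Scope classical_set_scope.
Local Open Scope ring_scope.

(* (i): two scalings l, l' of the same lattice differ by a power of p, and
   chi(p^k x) = chi(x) because p = 1 mod (p - 1).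

   (ii): since f(p x) = f(x), every lattice lambda H_p meets [1, p) in exactly
   one point, so (f) is supported on the lattices through the breakpoints
   1 = t_0 < ... < t_k = p of f on [1, p].  At t_i the order is t_i times the
   jump of slope y_i := c_i - c_(i-1), where c_i is the slope on [t_i, t_(i+1)]
   and c_(-1) := p c_(k-1) is the slope of x |-> f(p x) just left of 1.  Hence
   chi((f)) = sum_i chi(y_i) = chi((1 - p) c_(k-1)) = 0 mod (p - 1). *)

Lemma near_eq_lim (R : realType) (F : set_system R) (g h : R -> R) :
  Filter F -> {near F, g =1 h} -> lim (g @ F) = lim (h @ F).
Proof.
move=> FF gh; congr lim; apply/seteqP; split; apply: near_eq_cvg.
- by near=> x; rewrite (near gh x).
- by near=> x; rewrite (near gh x).
Unshelve. all: by end_near.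
Qed.

Lemma increasing_ltn {R : realType} {t : nat -> R} {k i j : nat} :
  (forall i, (i < k)%N -> t i < t i.+1) -> (i < j)%N -> (j <= k)%N -> t i < t j.
Proof.
move=> ht; elim: j => [//|j IH] ij jk.
move: ij; rewrite ltnS leq_eqVlt => /orP[/eqP ->|ij]; first exact: ht.
exact: lt_trans (IH ij (ltnW jk)) (ht _ jk).
Qed.

Lemma subdivision_locate {R : realType} {t : nat -> R} {k : nat} {a b l : R} :
  t 0%N = a -> t k = b -> (forall i, (i < k)%N -> t i < t i.+1) ->
  a <= l < b ->
  (exists2 i, (i < k)%N & l = t i) \/ (exists2 i, (i < k)%N & t i < l < t i.+1).
Proof.
move=> t0 tk ht /andP[al lb].
have exQ : exists i, (i <= k)%N && (t i <= l) by exists 0%N; rewrite t0 al.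
have ubQ i : (i <= k)%N && (t i <= l) -> (i <= k)%N by case/andP.
case: (ex_maxnP exQ ubQ) => i /andP[ik til] imax.
have ik' : (i < k)%N.
  rewrite ltn_neqAle ik andbT; apply/eqP => ei.
  by move: til; rewrite ei tk leNgt lb.
have lt1 : l < t i.+1.
  by rewrite ltNge; apply/negP => h; have := imax i.+1; rewrite ik' h ltnn => /(_ isT).
move: til; rewrite le_eqVlt => /orP[/eqP e|til]; first by left; exists i.
by right; exists i => //; rewrite til lt1.
Qed.

Section Hp_lattices.
Context {R : realType} {p : nat}.
Hypothesis p_prime : prime p.

Local Notation P := (p%:R : R).
Local Notation d := (p.-1)%:Z.

Lemma P_gt0 : 0 < P.
Proof. by rewrite ltr0n prime_gt0. Qed.

Lemma P_gt1 : 1 < P.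
Proof. by rewrite ltr1n prime_gt1. Qed.

Lemma expP_gt0 n : 0 < P ^+ n.
Proof. by rewrite exprn_gt0 // P_gt0. Qed.

Lemma expP_neq0 n : P ^+ n != 0.
Proof. by rewrite gt_eqF // expP_gt0. Qed.

Lemma intr_expp m : ((p%:Z ^+ m)%:~R : R) = P ^+ m.
Proof. by rewrite rmorphXn. Qed.

Lemma modz_mul_expp a m : ((a * p%:Z ^+ m) %% d)%Z = (a %% d)%Z.
Proof.
have pE : p%:Z = d + 1 by rewrite -PoszD addn1 prednK ?prime_gt0.
suff pm : ((p%:Z ^+ m) %% d)%Z = (1 %% d)%Z by rewrite -modzMmr pm modzMmr mulr1.
by elim: m => [//|m IH]; rewrite exprS -modzMmr IH modzMmr mulr1 pE modzDl.
Qed.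

Lemma chi_frac {x : R} {a : int} {n : nat} : x = a%:~R / P ^+ n -> chi p x = (a %% d)%Z.
Proof.
move=> hx; rewrite /chi; case: pselect => [h|nh]; last by exfalso; apply: nh; exists (a, n).
case: (cid h) => [[b m]] /= hb.
suff e : a * p%:Z ^+ m = b * p%:Z ^+ n by rewrite -(modz_mul_expp b n) -e modz_mul_expp.
apply: (@intr_inj R); rewrite !rmorphM /= !intr_expp.
move: hb; rewrite hx => /(congr1 (fun y => y * P ^+ n * P ^+ m)).
rewrite !mulfVK ?expP_neq0 // => ->.
by rewrite -mulrA [_ * P ^+ m]mulrC mulrA mulfVK ?expP_neq0.
Qed.

Lemma chi0 : chi p (0 : R) = 0.
Proof. by rewrite (@chi_frac 0 0 0) ?mul0r // mod0z. Qed.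

Lemma fracD (a b : int) n m : a%:~R / P ^+ n + b%:~R / P ^+ m =
  (a * p%:Z ^+ m + b * p%:Z ^+ n)%:~R / P ^+ (n + m) :> R.
Proof. by rewrite rmorphD !rmorphM /= !intr_expp exprD; field; rewrite !expP_neq0. Qed.

Lemma HpD {x y : R} : Hp p x -> Hp p y -> Hp p (x + y).
Proof. by move=> [a [n ->]] [b [m ->]]; rewrite fracD; do 2!eexists. Qed.

Lemma HpN {x : R} : Hp p x -> Hp p (- x).
Proof. by move=> [a [n ->]]; exists (- a), n; rewrite rmorphN mulNr. Qed.

Lemma HpMP {x : R} : Hp p x -> Hp p (P * x).
Proof. by move=> [a [n ->]]; exists (a * p%:Z), n; rewrite rmorphM mulrA [P * _]mulrC. Qed.

Lemma Hp_sum n (y : nat -> R) : (forall i, (i < n)%N -> Hp p (y i)) ->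
  Hp p (\sum_(i < n) y i).
Proof.
elim: n => [|n IH] hy; first by rewrite big_ord0; exists 0, 0%N; rewrite mul0r.
by rewrite big_ord_recr; apply: HpD; [apply: IH => i /ltnW; apply: hy | apply: hy].
Qed.

Lemma chiD {x y : R} : Hp p x -> Hp p y ->
  chi p (x + y) = ((chi p x + chi p y) %% d)%Z.
Proof.
move=> [a [n ->]] [b [m ->]].
rewrite (chi_frac (fracD _ _ _ _)) !(chi_frac (erefl _)) modzDm.
by rewrite -[LHS]modzDm !modz_mul_expp modzDm.
Qed.

Lemma chi_sum n (y : nat -> R) : (forall i, (i < n)%N -> Hp p (y i)) ->
  ((\sum_(i < n) chi p (y i)) %% d)%Z = chi p (\sum_(i < n) y i).
Proof.
elim: n => [|n IH] hy; first by rewrite !big_ord0 mod0z chi0.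
have hy' i : (i < n)%N -> Hp p (y i) by move/ltnW; apply: hy.
rewrite !big_ord_recr /= chiD; [|exact: Hp_sum hy'|exact: hy].
by rewrite -IH // modzDml.
Qed.

Lemma frac_scale (a : int) k n m : P ^+ n / P ^+ m * (a%:~R / P ^+ k) =
  (a * p%:Z ^+ n)%:~R / P ^+ (m + k) :> R.
Proof. by rewrite !rmorphM /= !intr_expp exprD; field; rewrite !expP_neq0. Qed.

Lemma Hp_scale (x : R) n m : Hp p x -> Hp p (P ^+ n / P ^+ m * x).
Proof. by move=> [a [k ->]]; rewrite frac_scale; do 2!eexists. Qed.

Lemma chi_scale (x : R) n m : Hp p x -> chi p (P ^+ n / P ^+ m * x) = chi p x.
Proof.
by move=> [a [k ->]]; rewrite (chi_frac (frac_scale _ _ _ _)) (chi_frac (erefl _)) modz_mul_expp.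
Qed.

Lemma chi_mul_1BP {c : R} : Hp p c -> chi p ((1 - P) * c) = 0.
Proof.
move=> [a [k ->]]; rewrite (@chi_frac _ (a * - d) k) ?mulrN -?mulNr ?modzMl //.
have dE : (d%:~R : R) = P - 1 by rewrite -{2}(prednK (prime_gt0 p_prime)) -addn1 natrD addrK.
by rewrite rmorphM rmorphN /= dE; field; rewrite expP_neq0.
Qed.

Lemma Hp1 : Hp p (1 : R).
Proof. by exists 1, 0%N; rewrite expr0 divr1. Qed.

Lemma scaledHp_self (l : R) : scaledHp p l l.
Proof. by exists 1; [exact: Hp1 | rewrite mulr1]. Qed.

Lemma scaledHp_subset {l l' : R} {n m : nat} : l' != 0 -> l * P ^+ n = l' * P ^+ m ->
  scaledHp p l `<=` scaledHp p l'.
Proof.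
move=> l'0 e _ [y hy <-]; exists (P ^+ m / P ^+ n * y); first exact: Hp_scale.
have -> : l = l' * P ^+ m / P ^+ n by rewrite -e mulfK ?expP_neq0.
by field; rewrite !expP_neq0.
Qed.

Lemma scaledHp_eq {l l' : R} {n m : nat} : 0 < l -> 0 < l' -> l * P ^+ n = l' * P ^+ m ->
  scaledHp p l = scaledHp p l'.
Proof.
move=> l0 l'0 e; apply/seteqP; split; first exact: (scaledHp_subset (lt0r_neq0 l'0) e).
exact: (scaledHp_subset (lt0r_neq0 l0) (esym e)).
Qed.

(* The positive units of H_p are the powers of p: if a b = p^(n+m) with a > 0
   then a = p^j. *)
Lemma scaledHp_commensurable {l l' : R} : 0 < l -> 0 < l' ->
  scaledHp p l = scaledHp p l' -> exists n m, l * P ^+ n = l' * P ^+ m.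
Proof.
move=> l0 l'0 E.
have : scaledHp p l l' by rewrite E; exact: scaledHp_self.
case=> _ [a [n ->]] ey.
have : scaledHp p l' l by rewrite -E; exact: scaledHp_self.
case=> _ [b [m ->]] ez.
have ab : (a * b)%:~R = P ^+ (n + m) :> R.
  have h : (a%:~R / P ^+ n) * (b%:~R / P ^+ m) = 1 :> R.
    by apply: (mulfI (lt0r_neq0 l0)); rewrite mulr1 [X in X = _]mulrA ey ez.
  rewrite rmorphM exprD.
  have -> : a%:~R * b%:~R = (a%:~R / P ^+ n * (b%:~R / P ^+ m)) * (P ^+ n * P ^+ m) :> R.
    by field; rewrite !expP_neq0.
  by rewrite h mul1r.
have a0 : 0 < a.
  have : 0 < a%:~R / P ^+ n :> R by rewrite -(pmulr_rgt0 _ l0) ey.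
  by rewrite pmulr_lgt0 ?invr_gt0 ?expP_gt0 // ltr0z.
case: a a0 ab ey => [a'|//] a0 ab ey.
have b0 : 0 < b.
  have : 0 < (Posz a' * b)%:~R :> R by rewrite ab expP_gt0.
  by rewrite ltr0z pmulr_rgt0.
case: b b0 ab ez => [b'|//] b0 ab ez.
have e : (a' * b')%N = (p ^ (n + m))%N.
  by apply/eqP; rewrite -(eqr_nat R) natrM natrX -ab rmorphM.
have : (a' %| p ^ (n + m))%N by rewrite -e dvdn_mulr.
case/(dvdn_pfactor _ _ p_prime) => j _ aj.
exists j, n; rewrite -ey aj.
have -> : ((p ^ j)%N%:~R : R) = P ^+ j by rewrite -natrX.
by rewrite mulrA mulfVK ?expP_neq0.
Qed.

Lemma chi_invmul_indep {l l' x : R} : 0 < l -> 0 < l' ->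
  scaledHp p l = scaledHp p l' -> scaledHp p l x ->
  chi p (l^-1 * x) = chi p (l'^-1 * x).
Proof.
move=> l0 l'0 E [y hy <-].
have [n [m e]] := scaledHp_commensurable l0 l'0 E.
have -> : l'^-1 * (l * y) = P ^+ m / P ^+ n * y.
  have -> : l' = l * P ^+ n / P ^+ m by rewrite e mulfK ?expP_neq0.
  by field; rewrite !expP_neq0 ?gt_eqF.
by rewrite chi_scale // mulKf ?gt_eqF.
Qed.

Lemma lamH_spec {H : set R} : Cp p H -> 0 < lamH p H /\ H = scaledHp p (lamH p H).
Proof. by move=> hH; rewrite /lamH; case: pselect => [h|//]; case: (cid h). Qed.

Lemma fundamental_rep {l : R} : 0 < l ->
  exists n m (l' : R), 1 <= l' < P /\ l * P ^+ n = l' * P ^+ m.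
Proof.
move=> l0.
have natr_le_expP k : (k%:R : R) <= P ^+ k.
  by rewrite -natrX ler_nat ltnW // ltn_expl // prime_gt1.
pose N := Num.Def.archi_bound l^-1.
have hN : l^-1 < N%:R by apply: archi_boundP; rewrite invr_ge0 ltW.
pose mu := l * P ^+ N.
have mu1 : 1 <= mu.
  rewrite /mu -[leLHS](mulfV (lt0r_neq0 l0)) ler_pM2l //.
  exact: le_trans (ltW hN) (natr_le_expP N).
pose M := Num.Def.archi_bound mu.
have hM : mu < M%:R by apply: archi_boundP; apply: le_trans mu1.
have exQ : exists j, P ^+ j <= mu by exists 0%N; rewrite expr0.
have ubQ j : P ^+ j <= mu -> (j <= M)%N.
  move=> hj; rewrite -(ler_eXn2l P_gt1).
  exact/ltW/(le_lt_trans hj (lt_le_trans hM (natr_le_expP M))).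
have [m hm mmax] := ex_maxnP exQ ubQ.
exists N, m, (mu / P ^+ m); split; last by rewrite mulfVK ?expP_neq0.
rewrite ler_pdivlMr ?expP_gt0 // mul1r hm ltr_pdivrMr ?expP_gt0 //.
have : ~~ (P ^+ m.+1 <= mu) by apply/negP => /mmax; rewrite ltnn.
by rewrite -ltNge exprS mulrC.
Qed.

Lemma fundamental_rep_unique {a b : R} {n m : nat} : 1 <= a < P -> 1 <= b < P ->
  a * P ^+ n = b * P ^+ m -> a = b.
Proof.
have no_lt (a' b' : R) n' m' : 1 <= a' < P -> 1 <= b' < P ->
    a' * P ^+ n' = b' * P ^+ m' -> ~ (n' < m')%N.
  move=> /andP[_ aP] /andP[b1 _] e nm.
  have h1 : a' * P ^+ n' < P ^+ n'.+1 by rewrite exprS ltr_pM2r ?expP_gt0.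
  have h2 : P ^+ n'.+1 <= b' * P ^+ m'.
    apply: le_trans (_ : P ^+ m' <= _); first by rewrite (ler_eXn2l P_gt1).
    by rewrite ler_peMl // ltW ?expP_gt0.
  by move: (lt_le_trans h1 h2); rewrite e ltxx.
move=> ha hb e; case: (ltngtP n m) => nm.
- by case: (no_lt _ _ _ _ ha hb e nm).
- by case: (no_lt _ _ _ _ hb ha (esym e) nm).
- by move: e; rewrite nm => /(mulIf (expP_neq0 m)).
Qed.

Definition diffq (f : R -> R) (l e : R) := (f ((1 + e) * l) - f l) / e.

Lemma OrdE {f : R -> R} {l a b : R} :
  diffq f l e @[e --> 0^'+] --> a -> diffq f l e @[e --> 0^'-] --> b ->
  Ord f l = a - b.
Proof. by move=> ha hb; rewrite /Ord (cvg_lim _ ha) ?(cvg_lim _ hb). Qed.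

Lemma diffq_affine_right (f : R -> R) (c c0 : R) {l del : R} : 0 < l -> 0 < del ->
  (forall y, l <= y <= l + del -> f y = c * y + c0) ->
  diffq f l e @[e --> 0^'+] --> c * l.
Proof.
move=> l0 d0 hf; apply: cvg_near_cst.
have dl : 0 < del / l by rewrite divr_gt0.
near=> e.
have e0 : 0 < e by near: e; exact: nbhs_right_gt.
have el : e * l < del by rewrite -ltr_pdivlMr //; near: e; exact: nbhs_right_lt.
have el0 : 0 < e * l by rewrite mulr_gt0.
by rewrite /diffq !hf; [field; rewrite lt0r_neq0 | apply/andP; split; lra ..].
Unshelve. all: by end_near.
Qed.

Lemma diffq_affine_left (f : R -> R) (c c0 : R) {l del : R} : 0 < l -> 0 < del ->
  (forall y, l - del <= y <= l -> f y = c * y + c0) ->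
  diffq f l e @[e --> 0^'-] --> c * l.
Proof.
move=> l0 d0 hf; apply: cvg_near_cst.
have dl : 0 < del / l by rewrite divr_gt0.
near=> e.
have e0 : e < 0 by near: e; exact: nbhs_left_lt.
have el : - del < e * l.
  by rewrite -ltr_pdivrMr // mulNr; near: e; apply: nbhs_left_gt; rewrite oppr_lt0.
have el0 : e * l < 0 by rewrite pmulr_llt0.
by rewrite /diffq !hf; [field; rewrite ltr0_neq0 | apply/andP; split; lra ..].
Unshelve. all: by end_near.
Qed.

Section Periodic.
Context {f : R -> R}.
Hypothesis f_periodic : forall x, 0 < x -> f (P * x) = f x.

Lemma periodic_expP n {x : R} : 0 < x -> f (P ^+ n * x) = f x.
Proof.
elim: n x => [|n IH] x x0; first by rewrite expr0 mul1r.
by rewrite exprS -mulrA f_periodic ?IH // mulr_gt0 ?expP_gt0.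
Qed.

Lemma diffq_rescale {l l' : R} {n m : nat} : 0 < l -> 0 < l' ->
  l * P ^+ n = l' * P ^+ m -> forall e, -1 < e -> diffq f l e = diffq f l' e.
Proof.
move=> l0 l'0 e x x1.
have x0 : 0 < 1 + x by rewrite -ltrBlDl sub0r.
rewrite /diffq -(periodic_expP n (mulr_gt0 x0 l0)) -(periodic_expP m (mulr_gt0 x0 l'0)).
rewrite -(periodic_expP n l0) -(periodic_expP m l'0).
have e1 : P ^+ n * l = P ^+ m * l' by rewrite mulrC e mulrC.
by rewrite mulrCA e1 mulrCA.
Qed.

Lemma Ord_rescale {l l' : R} {n m : nat} : 0 < l -> 0 < l' ->
  l * P ^+ n = l' * P ^+ m -> Ord f l = Ord f l'.
Proof.
move=> l0 l'0 e; have hq := diffq_rescale l0 l'0 e.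
rewrite /Ord; congr (_ - _); apply: near_eq_lim; near=> x; apply: hq.
- have : 0 < x by near: x; exact: nbhs_right_gt.
  lra.
- by near: x; apply: nbhs_left_gt; lra.
Unshelve. all: by end_near.
Qed.

End Periodic.

Lemma principal_divE {f : R -> R} {H : set R} :
  Cp p H -> principal_div p f H = Ord f (lamH p H).
Proof. by move=> hH; rewrite /principal_div asboolT. Qed.

Lemma principal_div_neq0 {f : R -> R} {H : set R} : principal_div p f H != 0 -> Cp p H.
Proof. by rewrite /principal_div; case: asboolP => // _; rewrite eqxx. Qed.

Section Subdivision.
Variables (f : R -> R) (k : nat) (t c c0 : nat -> R).
Hypothesis f_periodic : forall x, 0 < x -> f (P * x) = f x.
Hypotheses (t0 : t 0%N = 1) (tk : t k = P).
Hypothesis t_incr : forall i, (i < k)%N -> t i < t i.+1.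
Hypothesis c_Hp : forall i, (i < k)%N -> Hp p (c i).
Hypothesis f_affine : forall i, (i < k)%N ->
  forall x, t i <= x <= t i.+1 -> f x = c i * x + c0 i.

(* By periodicity, just left of t 0 = 1 the function f is x |-> f (p x), of slope p c_(k-1). *)
Definition left_slope i := if i == 0%N then P * c k.-1 else c i.-1.
Definition jump i := c i - left_slope i.

Lemma k_gt0 : (0 < k)%N.
Proof.
rewrite lt0n; apply/eqP => k0; move: tk; rewrite k0 t0 => h.
by move: P_gt1; rewrite -h ltxx.
Qed.

Lemma t_ge1 {i : nat} : (i <= k)%N -> 1 <= t i.
Proof. by case: i => [|i] ik; rewrite -t0 // ltW // (increasing_ltn t_incr). Qed.

Lemma t_gt0 {i : nat} : (i <= k)%N -> 0 < t i.
Proof. by move=> ik; apply: lt_le_trans ltr01 (t_ge1 ik). Qed.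

Lemma t_ltP {i : nat} : (i < k)%N -> t i < P.
Proof. by move=> ik; rewrite -tk (increasing_ltn t_incr). Qed.

Lemma diffq_node_right {i : nat} : (i < k)%N -> diffq f (t i) e @[e --> 0^'+] --> c i * t i.
Proof.
move=> ik; apply: (diffq_affine_right _ _ (c0 i) (t_gt0 (ltnW ik)) (_ : 0 < t i.+1 - t i)).
  by rewrite subr_gt0 t_incr.
by move=> z; rewrite addrC subrK; exact: f_affine.
Qed.

Lemma diffq_node_left {i : nat} : (i < k)%N ->
  diffq f (t i) e @[e --> 0^'-] --> left_slope i * t i.
Proof.
move=> ik; rewrite /left_slope; case: eqP => [->|/eqP i0].
  have kk : (k.-1 < k)%N by rewrite ltn_predL k_gt0.
  have tk1 := t_ltP kk; have tk0 := t_gt0 (ltnW kk); have P0 := P_gt0.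
  apply: (diffq_affine_left _ _ (c0 k.-1) (t_gt0 (leq0n k)) (_ : 0 < (P - t k.-1) / P)).
    by rewrite divr_gt0 // subr_gt0.
  move=> z /andP[z1 z2]; rewrite t0 in z1 z2.
  have e1 : (P - t k.-1) / P * P = P - t k.-1 by rewrite mulfVK // lt0r_neq0.
  have z0 : 0 < z.
    apply: lt_le_trans z1; rewrite subr_gt0 ltr_pdivrMr // mul1r; lra.
  rewrite -f_periodic // (f_affine _ kk); first by ring.
  rewrite prednK ?k_gt0 // tk; move: e1 z1; set q := (P - t k.-1) / P => e1 z1.
  apply/andP; split; nra.
have ei : i.-1.+1 = i by rewrite prednK // lt0n.
have ipk : (i.-1 < k)%N by rewrite -ltnS ei ltnW.
apply: (diffq_affine_left _ _ (c0 i.-1) (t_gt0 (ltnW ik)) (_ : 0 < t i - t i.-1)).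
  by rewrite subr_gt0 -{2}ei t_incr.
by move=> z; rewrite opprB addrC subrK => hz; apply: f_affine => //; rewrite ei.
Qed.

Lemma Ord_node {i : nat} : (i < k)%N -> Ord f (t i) = t i * jump i.
Proof.
move=> ik; rewrite (OrdE (diffq_node_right ik) (diffq_node_left ik)) /jump.
by rewrite mulrBr mulrC [t i * left_slope i]mulrC.
Qed.

Lemma Ord_between {i : nat} {l : R} : (i < k)%N -> t i < l < t i.+1 -> Ord f l = 0.
Proof.
move=> ik /andP[l1 l2]; have l0 : 0 < l := lt_trans (t_gt0 (ltnW ik)) l1.
have hr : diffq f l e @[e --> 0^'+] --> c i * l.
  apply: (diffq_affine_right _ _ (c0 i) l0 (_ : 0 < t i.+1 - l)); first by rewrite subr_gt0.
  move=> z; rewrite addrC subrK => /andP[z1 z2]; apply: f_affine => //.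
  by rewrite z2 andbT (le_trans (ltW l1) z1).
have hl : diffq f l e @[e --> 0^'-] --> c i * l.
  apply: (diffq_affine_left _ _ (c0 i) l0 (_ : 0 < l - t i)); first by rewrite subr_gt0.
  move=> z; rewrite opprB addrC subrK => /andP[z1 z2]; apply: f_affine => //.
  by rewrite z1 (le_trans z2 (ltW l2)).
by rewrite (OrdE hr hl) subrr.
Qed.

Lemma Hp_jump i : (i < k)%N -> Hp p (jump i).
Proof.
have kk : (k.-1 < k)%N by rewrite ltn_predL k_gt0.
move=> ik; apply: HpD (c_Hp _ ik) (HpN _); rewrite /left_slope.
by case: eqP => _; [apply/HpMP/c_Hp | apply/c_Hp/(leq_ltn_trans (leq_pred i))].
Qed.

Lemma sum_jump : \sum_(i < k) jump i = (1 - P) * c k.-1.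
Proof.
rewrite -(prednK k_gt0) big_ord_recl /=.
under eq_bigr => i _ do rewrite /jump /left_slope /bump /= add1n /=.
rewrite -(big_mkord xpredT (fun i => c i.+1 - c i)) telescope_sumr // /jump /left_slope /=.
by ring.
Qed.

Definition node_lattice i := scaledHp p (t i).

Lemma principal_div_support :
  [set H | principal_div p f H != 0] `<=` node_lattice @` `I_k.
Proof.
move=> H /= hD; have hH := principal_div_neq0 hD.
have [L0 HL] := lamH_spec hH.
have [n [m [l' [hl' e]]]] := fundamental_rep L0.
have l'0 : 0 < l' by case/andP: hl' => h _; exact: lt_le_trans ltr01 h.
move: hD; rewrite principal_divE // (Ord_rescale f_periodic L0 l'0 e).
case: (subdivision_locate t0 tk t_incr hl') => [[i ik li]|[i ik hi]].
  by move=> _; exists i => //; rewrite /node_lattice HL -li (scaledHp_eq L0 l'0 e).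
by rewrite (Ord_between ik hi) eqxx.
Qed.

Lemma node_lattice_inj : set_inj `I_k node_lattice.
Proof.
move=> a b /set_mem /= ak /set_mem /= bk eab.
have [n [m e]] := scaledHp_commensurable (t_gt0 (ltnW ak)) (t_gt0 (ltnW bk)) eab.
have rep_a : 1 <= t a < P by rewrite t_ge1 ?t_ltP // ltnW.
have rep_b : 1 <= t b < P by rewrite t_ge1 ?t_ltP // ltnW.
have tab := fundamental_rep_unique rep_a rep_b e.
case: (ltngtP a b) => // hab.
- by move: (increasing_ltn t_incr hab (ltnW bk)); rewrite tab ltxx.
- by move: (increasing_ltn t_incr hab (ltnW ak)); rewrite tab ltxx.
Qed.

Lemma chiH_principal_div_node i : (i < k)%N ->
  chiH p (node_lattice i) (principal_div p f (node_lattice i)) = chi p (jump i).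
Proof.
move=> ik; have ti0 := t_gt0 (ltnW ik).
have C : Cp p (node_lattice i) by exists (t i).
have [L0 gL] := lamH_spec C.
have [n [m e]] := scaledHp_commensurable L0 ti0 (esym gL).
rewrite principal_divE // (Ord_rescale f_periodic L0 ti0 e) Ord_node // /chiH.
rewrite (chi_invmul_indep L0 ti0 (esym gL)) ?mulKf ?gt_eqF //.
by rewrite -gL; exists (jump i) => //; exact: Hp_jump.
Qed.

Lemma chiDiv_principal : (chiDiv p (principal_div p f) %% d)%Z = 0.
Proof.
have vanish : node_lattice @` `I_k `\` [set H | principal_div p f H != 0] `<=`
    (fun H => chiH p H (principal_div p f H)) @^-1` [set 0].
  by move=> H [_ /negP]; rewrite negbK => /eqP /= ->; rewrite /chiH mulr0 chi0.
rewrite /chiDiv (fsbig_widen _ _ _ principal_div_support vanish).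
rewrite fsbig_image; last exact: node_lattice_inj.
rewrite -fsbig_ord; under eq_bigr => i _ do rewrite chiH_principal_div_node //.
rewrite chi_sum ?sum_jump; last by move=> i; exact: Hp_jump.
by apply: chi_mul_1BP; apply: c_Hp; rewrite ltn_predL k_gt0.
Qed.

End Subdivision.

Lemma piecewise_affine_subdivision {f : R -> R} {a b : R} :
  piecewise_affine_Hp p f -> 0 < a -> a <= b ->
  exists k (t c c0 : nat -> R), [/\ t 0%N = a, t k = b,
    forall i, (i < k)%N -> t i < t i.+1,
    forall i, (i < k)%N -> Hp p (c i) &
    forall i, (i < k)%N -> forall x, t i <= x <= t i.+1 -> f x = c i * x + c0 i].
Proof.
move=> hpw a0 ab; have [k [t [t0 [tk [tinc pieces]]]]] := hpw a b a0 ab.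
have pieces' i : exists cd : R * R, (i < k)%N -> Hp p cd.1 /\
    forall x, t i <= x <= t i.+1 -> f x = cd.1 * x + cd.2.
  case: (ltnP i k) => ik; last by exists (0, 0).
  by have [c [c0 [hc hx]]] := pieces i ik; exists (c, c0).
have [cc hcc] := choice pieces'.
by exists k, t, (fun i => (cc i).1), (fun i => (cc i).2); split => // i /hcc[].
Qed.

Lemma chiDiv_principal_div (f : R -> R) : inK p f ->
  (chiDiv p (principal_div p f) %% d)%Z = 0.
Proof.
move=> [_ [hpw f_periodic]].
have [k [t [c [c0 [t0 tk tinc c_Hp f_affine]]]]] :=
  piecewise_affine_subdivision hpw ltr01 (ltW P_gt1).
exact: chiDiv_principal f_periodic t0 tk tinc c_Hp f_affine.
Qed.

Lemma chiH_spec {H : set R} {l x : R} : Cp p H -> 0 < l -> H = scaledHp p l -> H x ->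
  chiH p H x = chi p (l^-1 * x).
Proof.
move=> hH l0 Hl Hx; have [L0 HL] := lamH_spec hH.
by apply: chi_invmul_indep; rewrite -?HL.
Qed.

End Hp_lattices.

Theorem proposition5p5 (R : realType) (p : nat) :
  prime p ->
  (* (i) existence and uniqueness of chi_H *)
  (forall H : set R, Cp p H ->
     exists chiH0 : R -> int,
       (forall l : R, 0 < l -> H = scaledHp p l ->
          forall x, H x -> chiH0 x = chi p (l^-1 * x)) /\
       (forall g : R -> int,
          (forall l : R, 0 < l -> H = scaledHp p l ->
             forall x, H x -> g x = chi p (l^-1 * x)) ->
          forall x, H x -> g x = chiH0 x)) /\
  (* (ii) principal divisors lie in the kernel of chi : Div(C_p) -> Z/(p-1)Z *)
  (forall f : R -> R, inK p f ->
     is_divisor p (principal_div p f) ->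
     (chiDiv p (principal_div p f) %% (p.-1)%:Z)%Z = 0%Z).
Proof.
move=> p_prime; split.
- move=> H hH; exists (chiH p H); split=> [l l0 Hl x Hx | g hg x Hx].
    exact: (chiH_spec p_prime hH l0 Hl Hx).
  by have [L0 HL] := lamH_spec hH; exact: hg.
- (* (f) vanishes off C_p by definition and has finite support by the subdivision. *)
  by move=> f hf _; exact: chiDiv_principal_div p_prime f hf.
Qed.
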